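(* Let $n\ge 6$ be even, let $\alpha>n-3$, and let $f$ be a function on $(0,\infty)$ supported in $[0,\lambda_1]$ for some $0<\lambda_1\lesssim1$, which is $\frac n2-1$ times differentiable with $|f^{(j)}(\lambda)|\lesssim\lambda^{\alpha-j}$ for $0<\lambda$ and $0\le j\le\frac n2-1$. Then for $t\neq0$, $$\bigg|\int_0^\infty e^{it\lambda^2}f(\lambda)\,d\lambda\bigg|\lesssim|t|^{1-\frac n2}.$$
   Context: The hypothesis on $f$ is what the paper denotes $f(\lambda)=\widetilde O_{\frac n2-1}(\lambda^\alpha)$: the $j$-th derivative of $f$ is $O(\lambda^{\alpha-j})$ for each $j\le\frac n2-1$. *)

From Stdlib Require Import Reals.
From Coquelicot Require Import Coquelicot.
Open Scope R_scope.

Definition eix (x : R) : C := (cos x, sin x).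

(* The oscillatory integral  int_0^infty e^{i t lam^2} f(lam) dlam,
   for f supported in [0, lam1]: it reduces to the integral over [0, lam1]. *)
Definition osc_int (t lam1 : R) (f : R -> C) : C :=
  @RInt C_R_CompleteNormedModule (fun lam => Cmult (eix (t * lam ^ 2)) (f lam)) 0 lam1.

Definition tildeO_hyp (m : nat) (alpha K : R) (f : R -> C) : Prop :=
  exists g : nat -> R -> C,
    (forall lam, g 0%nat lam = f lam) /\
    (forall (j : nat) lam, (j < m)%nat -> 0 < lam ->
       @is_derive R_AbsRing C_R_NormedModule (g j) lam (g (S j) lam)) /\
    (forall (j : nat) lam, (j <= m)%nat -> 0 < lam ->
       Cmod (g j lam) <= K * Rpower lam (alpha - INR j)).

From Stdlib Require Import Reals Arith Lra Lia.
From Coquelicot Require Import Coquelicot.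
Open Scope R_scope.

(* Substituting [u = x^2] turns the integral into [∫_0^(lam1^2) e^(itu) F(u) du] with
   [F(u) = f(√u)/(2√u) = Õ_m(u^e)], where [m = n/2 - 1] and [e = (alpha-1)/2 > m - 1]; real and
   imaginary parts are treated separately.  For [d = PI/|t|] the phase is antiperiodic,
   [e^(it(u-d)) = -e^(itu)], so the integral equals [(1/2)^m ∫ e^(itu) Δ^m F(u) du] with
   [Δ F(u) = F(u) - F(u+d)].  On [|u| <= m d], [|Δ^m F| <= 2^m sup |F| = O(d^e)] on an interval of
   length [2 m d], giving [O(d^(e+1)) = O(d^m)]; beyond, the mean value theorem gives
   [|Δ^m F(u)| <= d^m |F^(m)(ξ)|] with [F^(m)(ξ) = O(ξ^(e-m))] integrable since [e - m > -1].
   Hence the integral is [O(d^m) = O(|t|^-m)]; for [|t| < PI] the trivial bound suffices. *)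

Lemma Rpower_pos x y : 0 < Rpower x y.
Proof. unfold Rpower; apply exp_pos. Qed.

Lemma Rpower_minus_1 x b : 0 < x -> Rpower x (b - 1) = Rpower x b / x.
Proof.
  intros hx. unfold Rminus. rewrite Rpower_plus, Rpower_Ropp, Rpower_1 by lra. reflexivity.
Qed.

Lemma Rpower_sqrt_l v x : 0 < v -> Rpower (sqrt v) x = Rpower v (x / 2).
Proof.
  intros hv. rewrite <- Rpower_sqrt by lra. rewrite Rpower_mult. f_equal. field.
Qed.

Lemma Rpower_le_1 d c : 0 < d <= 1 -> 0 <= c -> Rpower d c <= 1.
Proof.
  intros hd hc.
  assert (E : Rpower 1 c = 1) by (unfold Rpower; rewrite ln_1, Rmult_0_r, exp_0; reflexivity).
  rewrite <- E. apply Rle_Rpower_l; lra.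
Qed.

Lemma Rpower_le_pow d x m : 0 < d <= 1 -> INR m <= x -> Rpower d x <= d ^ m.
Proof.
  intros hd hx. replace x with (INR m + (x - INR m)) by ring.
  rewrite Rpower_plus, Rpower_pow by lra.
  pose proof (Rpower_le_1 d (x - INR m) hd ltac:(lra)). pose proof (pow_le d m ltac:(lra)). nra.
Qed.

Lemma Rle_Rpower_l_neg a b c : 0 < a <= b -> c <= 0 -> Rpower b c <= Rpower a c.
Proof.
  intros hab hc.
  assert (E : forall x, Rpower x c = / Rpower x (- c))
    by (intros; rewrite <- Rpower_Ropp, Ropp_involutive; reflexivity).
  rewrite !E. apply Rinv_le_contravar; [apply Rpower_pos | apply Rle_Rpower_l; lra].
Qed.

(* The paper's [g = Õ_k(x^b)] for real-valued [g], with the implicit constant [C] made explicit. *)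
Fixpoint tildeO (k : nat) (b C : R) (g : R -> R) : Prop :=
  (forall x, 0 < x -> Rabs (g x) <= C * Rpower x b) /\
  match k with
  | O => True
  | S k => exists g', (forall x, 0 < x -> is_derive g x (g' x)) /\ tildeO k (b - 1) C g'
  end.

Lemma tildeO_le k b C g : tildeO k b C g -> forall x, 0 < x -> Rabs (g x) <= C * Rpower x b.
Proof. destruct k; intros [H _]; exact H. Qed.

Lemma tildeO_const_nonneg k b C g : tildeO k b C g -> 0 <= C.
Proof.
  intros H. pose proof (tildeO_le k b C g H 1 Rlt_0_1).
  pose proof (Rpower_pos 1 b). pose proof (Rabs_pos (g 1)). nra.
Qed.

Lemma tildeO_pred k : forall b C g, tildeO (S k) b C g -> tildeO k b C g.
Proof.
  induction k as [|k IH]; intros b C g [Hb [g' [Hd Hg']]]; split; auto.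
  exists g'; split; auto.
Qed.

Lemma tildeO_le_const k : forall b C C' g, C <= C' -> tildeO k b C g -> tildeO k b C' g.
Proof.
  assert (Hb : forall b C C' (g : R -> R) x, C <= C' -> 0 < x ->
            Rabs (g x) <= C * Rpower x b -> Rabs (g x) <= C' * Rpower x b).
  { intros b C C' g x hC hx H. pose proof (Rpower_pos x b). nra. }
  induction k as [|k IH]; intros b C C' g hC [H1 H2]; split; eauto.
  destruct H2 as [g' [Hd Hg']]; eauto.
Qed.

Lemma tildeO_plus k : forall b C1 C2 g1 g2, tildeO k b C1 g1 -> tildeO k b C2 g2 ->
  tildeO k b (C1 + C2) (fun x => g1 x + g2 x).
Proof.
  assert (Hb : forall b C1 C2 (g1 g2 : R -> R) x,
            Rabs (g1 x) <= C1 * Rpower x b -> Rabs (g2 x) <= C2 * Rpower x b ->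
            Rabs (g1 x + g2 x) <= (C1 + C2) * Rpower x b).
  { intros. pose proof (Rabs_triang (g1 x) (g2 x)). lra. }
  induction k as [|k IH]; intros b C1 C2 g1 g2 [H1 H2] [K1 K2]; split; auto.
  destruct H2 as [g1' [Hd1 Hg1']], K2 as [g2' [Hd2 Hg2']].
  exists (fun x => g1' x + g2' x); split; auto.
  intros x hx. apply (is_derive_plus g1 g2); auto.
Qed.

Lemma tildeO_scal k : forall b C c g, tildeO k b C g ->
  tildeO k b (Rabs c * C) (fun x => c * g x).
Proof.
  assert (Hb : forall b C c (g : R -> R) x, Rabs (g x) <= C * Rpower x b ->
            Rabs (c * g x) <= Rabs c * C * Rpower x b).
  { intros. rewrite Rabs_mult, Rmult_assoc. apply Rmult_le_compat_l; auto using Rabs_pos. }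
  induction k as [|k IH]; intros b C c g [H1 H2]; split; auto.
  destruct H2 as [g' [Hd Hg']].
  exists (fun x => c * g' x); split; auto.
  intros x hx. apply (is_derive_scal g x c (g' x)); auto.
Qed.

Lemma tildeO_ext k : forall b C g h, (forall x, 0 < x -> g x = h x) ->
  tildeO k b C g -> tildeO k b C h.
Proof.
  induction k as [|k IH]; intros b C g h E [H1 H2];
    (split; [intros x hx; rewrite <- E by exact hx; auto |]); [exact I |].
  destruct H2 as [g' [Hd Hg']]. exists g'; split; eauto.
  intros x hx. apply (is_derive_ext_loc g); auto.
  apply (locally_open (fun u => 0 < u)); [apply open_gt | | exact hx]. exact E.
Qed.

Lemma tildeO_continuous k b C g x : tildeO (S k) b C g -> 0 < x -> continuous g x.
Proof.
  intros [_ [g' [Hd _]]] hx. apply (ex_derive_continuous (K := R_AbsRing) (V := R_NormedModule)).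
  exists (g' x); auto.
Qed.

Lemma tildeO_derivs k : forall b C g, tildeO k b C g -> exists G : nat -> R -> R,
  G 0%nat = g /\
  (forall j x, (j < k)%nat -> 0 < x -> is_derive (G j) x (G (S j) x)) /\
  (forall x, 0 < x -> Rabs (G k x) <= C * Rpower x (b - INR k)).
Proof.
  induction k as [|k IH]; intros b C g Hg.
  - exists (fun _ => g). split; [reflexivity | split; [intros; lia |]].
    intros x hx. rewrite Rminus_0_r. exact (tildeO_le _ _ _ _ Hg x hx).
  - destruct Hg as [_ [g' [Hd Hg']]].
    destruct (IH _ _ _ Hg') as [G [HG0 [HGd HGb]]].
    exists (fun j => match j with O => g | S j => G j end).
    split; [reflexivity | split].
    + intros [|j] x hj hx; [rewrite HG0; auto | apply HGd; auto; lia].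
    + intros x hx. replace (b - INR (S k)) with (b - 1 - INR k) by (rewrite S_INR; ring).
      apply HGb; exact hx.
Qed.

(* The quotient rule [(g/x)' = g'/x - (g/x)/x] accounts for the recursion. *)
Fixpoint div_x_const (k : nat) : R :=
  match k with O => 1 | S k => div_x_const k + div_x_const k * div_x_const k end.

Lemma div_x_const_ge_1 k : 1 <= div_x_const k.
Proof. induction k; simpl; nra. Qed.

Lemma tildeO_div_x k : forall b C g, tildeO k b C g ->
  tildeO k (b - 1) (div_x_const k * C) (fun x => g x / x).
Proof.
  assert (Hb : forall b C A (g : R -> R), 0 <= C -> 1 <= A ->
            (forall x, 0 < x -> Rabs (g x) <= C * Rpower x b) ->
            forall x, 0 < x -> Rabs (g x / x) <= A * C * Rpower x (b - 1)).
  { intros b C A g hC hA H x hx. rewrite Rpower_minus_1 by exact hx. unfold Rdiv.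
    rewrite Rabs_mult, Rabs_inv, (Rabs_pos_eq x) by lra.
    pose proof (H x hx). pose proof (Rpower_pos x b). pose proof (Rinv_0_lt_compat x hx).
    apply Rle_trans with (C * Rpower x b * / x); [apply Rmult_le_compat_r; lra |].
    replace (A * C * (Rpower x b * / x)) with (A * (C * Rpower x b * / x)) by ring.
    assert (0 <= C * Rpower x b * / x) by (apply Rmult_le_pos; nra). nra. }
  induction k as [|k IH]; intros b C g Hg;
    pose proof (tildeO_const_nonneg _ _ _ _ Hg) as hC.
  - split; [apply Hb; [exact hC | simpl; lra | exact (tildeO_le _ _ _ _ Hg)] | exact I].
  - pose proof (div_x_const_ge_1 (S k)). pose proof (tildeO_pred _ _ _ _ Hg) as Hg_pred.
    destruct Hg as [Hgb [g' [Hd Hg']]]. split; [apply Hb; auto |].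
    exists (fun x => g' x / x + (-1) * ((g x / x) / x)). split.
    + intros x hx.
      replace (g' x / x + -1 * (g x / x / x)) with ((g' x * x - g x * 1) / x ^ 2)
        by (field; lra).
      apply (is_derive_div g (fun x => x)); auto using is_derive_id; lra.
    + pose proof (tildeO_plus _ _ _ _ _ _ (IH _ _ _ Hg')
                    (tildeO_scal _ _ _ (-1) _ (IH _ _ _ (IH _ _ _ Hg_pred)))) as Hsum.
      eapply tildeO_le_const; [| exact Hsum].
      rewrite Rabs_m1. simpl. pose proof (div_x_const_ge_1 k). nra.
Qed.

Lemma is_derive_comp_sqrt (g : R -> R) u l : 0 < u -> is_derive g (sqrt u) l ->
  is_derive (fun v => g (sqrt v)) u (l / (2 * sqrt u)).
Proof.
  intros hu Hg. pose proof (sqrt_lt_R0 u hu).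
  pose proof (is_derive_comp g sqrt u _ _ Hg
                (is_derive_sqrt (fun x => x) u 1 (is_derive_id u) hu)) as P.
  unfold scal in P; simpl in P; unfold mult in P; simpl in P.
  replace (l / (2 * sqrt u)) with (1 / (2 * sqrt u) * l) by (field; lra). exact P.
Qed.

(* Chain rule: [d/du g(√u) = q(√u)] with [q x = g'(x) / (2x)], to which [tildeO_div_x] applies. *)
Fixpoint comp_sqrt_const (k : nat) : R :=
  match k with O => 1 | S k => comp_sqrt_const k * div_x_const k end.

Lemma comp_sqrt_const_ge_1 k : 1 <= comp_sqrt_const k.
Proof. induction k; simpl; [lra |]. pose proof (div_x_const_ge_1 k). nra. Qed.

Lemma tildeO_comp_sqrt k : forall b C g, tildeO k b C g ->
  tildeO k (b / 2) (comp_sqrt_const k * C) (fun u => g (sqrt u)).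
Proof.
  assert (Hb : forall b C B (g : R -> R), 0 <= C -> 1 <= B ->
            (forall x, 0 < x -> Rabs (g x) <= C * Rpower x b) ->
            forall u, 0 < u -> Rabs (g (sqrt u)) <= B * C * Rpower u (b / 2)).
  { intros b C B g hC hB H u hu. rewrite <- Rpower_sqrt_l by exact hu.
    pose proof (H (sqrt u) (sqrt_lt_R0 u hu)). pose proof (Rpower_pos (sqrt u) b).
    assert (0 <= C * Rpower (sqrt u) b) by nra. nra. }
  induction k as [|k IH]; intros b C g Hg;
    pose proof (tildeO_const_nonneg _ _ _ _ Hg) as hC.
  - split; [apply Hb; [exact hC | simpl; lra | exact (tildeO_le _ _ _ _ Hg)] | exact I].
  - pose proof (comp_sqrt_const_ge_1 (S k)).
    destruct Hg as [Hgb [g' [Hd Hg']]]. split; [apply Hb; auto |].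
    set (q := fun x => / 2 * (g' x / x)).
    assert (Hq : tildeO k (b - 1 - 1) (div_x_const k * C) q).
    { pose proof (tildeO_scal _ _ _ (/ 2) _ (tildeO_div_x _ _ _ _ Hg')) as Hhalf.
      eapply tildeO_le_const; [| exact Hhalf]. rewrite Rabs_pos_eq by lra.
      pose proof (div_x_const_ge_1 k). nra. }
    exists (fun u => q (sqrt u)). split.
    + intros u hu. pose proof (sqrt_lt_R0 u hu).
      replace (q (sqrt u)) with (g' (sqrt u) / (2 * sqrt u)) by (unfold q; field; lra).
      apply is_derive_comp_sqrt; auto.
    + replace (b / 2 - 1) with ((b - 1 - 1) / 2) by field.
      replace (comp_sqrt_const (S k) * C) with (comp_sqrt_const k * (div_x_const k * C))
        by (simpl; ring).
      apply IH; exact Hq.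
Qed.

Definition fdiff (d : R) (G : R -> R) (u : R) : R := G u - G (u + d).

Fixpoint fdiff_iter (k : nat) (d : R) (G : R -> R) : R -> R :=
  match k with O => G | S k => fdiff_iter k d (fdiff d G) end.

Lemma continuous_comp_mult (psi : R -> R) t : (forall x, continuous psi x) ->
  forall u, continuous (fun u => psi (t * u)) u.
Proof.
  intros H u. apply (continuous_comp (fun u => t * u) psi); [| apply H].
  apply (continuous_mult (fun _ => t) (fun u => u)); [apply continuous_const | apply continuous_id].
Qed.

Lemma continuous_shift (G : R -> R) d v : continuous G (v + d) -> continuous (fun w => G (w + d)) v.
Proof.
  intros H. apply (continuous_comp (fun w => w + d) G); [| exact H].
  apply (continuous_plus (fun w => w) (fun _ => d)); [apply continuous_id | apply continuous_const].
Qed.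

Lemma is_derive_shift (G : R -> R) d v l :
  is_derive G (v + d) l -> is_derive (fun w => G (w + d)) v l.
Proof.
  intros H.
  assert (Hs : is_derive (fun w : R => w + d) v 1) by (auto_derive; auto; ring).
  pose proof (is_derive_comp G (fun w => w + d) v _ _ H Hs) as P.
  unfold scal in P; simpl in P; unfold mult in P; simpl in P.
  rewrite Rmult_1_l in P. exact P.
Qed.

Lemma continuous_fdiff_iter k : forall d (G : R -> R), (forall v, continuous G v) ->
  forall v, continuous (fdiff_iter k d G) v.
Proof.
  induction k as [|k IH]; intros d G H; simpl; auto.
  apply IH. intros v. apply (continuous_minus G (fun w => G (w + d))); auto using continuous_shift.
Qed.

Lemma fdiff_iter_eq0 k : forall d (G : R -> R) L, 0 <= d ->
  (forall v, L < v -> G v = 0) -> forall v, L < v -> fdiff_iter k d G v = 0.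
Proof.
  induction k as [|k IH]; intros d G L hd H; simpl; auto.
  apply IH; auto. intros v hv. unfold fdiff. rewrite !H by lra. ring.
Qed.

Lemma fdiff_iter_abs_le k : forall d (G : R -> R) u M, 0 <= d ->
  (forall v, v <= u + INR k * d -> Rabs (G v) <= M) -> Rabs (fdiff_iter k d G u) <= 2 ^ k * M.
Proof.
  induction k as [|k IH]; intros d G u M hd H; simpl.
  - rewrite Rmult_1_l. apply H. simpl. lra.
  - replace (2 * 2 ^ k * M) with (2 ^ k * (2 * M)) by ring. apply IH; auto.
    intros v hv. rewrite S_INR in H. unfold fdiff.
    pose proof (Rabs_triang (G v) (- G (v + d))). rewrite Rabs_Ropp in *.
    pose proof (H v ltac:(lra)). pose proof (H (v + d) ltac:(lra)). unfold Rminus. lra.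
Qed.

Lemma fdiff_iter_mvt k : forall (G : nat -> R -> R) d u, 0 < d -> 0 < u ->
  (forall j v, (j < k)%nat -> 0 < v -> is_derive (G j) v (G (S j) v)) ->
  exists xi, u <= xi <= u + INR k * d /\ fdiff_iter k d (G 0%nat) u = (- d) ^ k * G k xi.
Proof.
  induction k as [|k IH]; intros G d u hd hu HG.
  - exists u; split; [simpl; lra | simpl; ring].
  - pose proof (pos_INR k).
    destruct (IH (fun j => fdiff d (G j)) d u hd hu) as [xi [Hxi E]].
    { intros j v hj hv. apply (is_derive_minus (G j) (fun w => G j (w + d))).
      - apply HG; [lia | exact hv].
      - apply is_derive_shift, HG; [lia | lra]. }
    assert (HGk : forall x, xi <= x <= xi + d -> is_derive (G k) x (G (S k) x))
      by (intros x hx; apply HG; [lia | nra]).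
    destruct (MVT_gen (G k) xi (xi + d) (G (S k))) as [c [Hc Ec]].
    + intros x hx. rewrite Rmin_left, Rmax_right in hx by lra. apply HGk; lra.
    + intros x hx. rewrite Rmin_left, Rmax_right in hx by lra. apply continuity_pt_filterlim.
      apply (ex_derive_continuous (K := R_AbsRing) (V := R_NormedModule)).
      exists (G (S k) x). apply HGk; exact hx.
    + rewrite Rmin_left, Rmax_right in Hc by lra.
      exists c. split; [rewrite S_INR; nra |].
      simpl. rewrite E. unfold fdiff.
      replace (G k xi - G k (xi + d)) with (- (G k (xi + d) - G k xi)) by ring.
      rewrite Ec. ring.
Qed.

Lemma ex_RInt_continuous_R (f : R -> R) a b : (forall z, continuous f z) -> ex_RInt f a b.
Proof. intros H. apply (ex_RInt_continuous (V := R_CompleteNormedModule)); auto. Qed.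

Lemma RInt_eq0 (f : R -> R) a b : (forall x, Rmin a b < x < Rmax a b -> f x = 0) -> RInt f a b = 0.
Proof.
  intros H. rewrite (RInt_ext f (fun _ => 0)) by exact H. rewrite RInt_const.
  unfold scal; simpl; unfold mult; simpl. ring.
Qed.

Section AntiperiodicShift.

Variables (p : R -> R) (d : R).
Hypothesis d_pos : 0 < d.
Hypothesis p_continuous : forall x, continuous p x.
Hypothesis p_antiperiodic : forall w, p (w - d) = - p w.

(* Substituting [u = w - d] gives [∫ p(u) G(u + d) = -∫ p(w) G(w)] once [G] vanishes near both
   ends. *)
Lemma RInt_antiperiodic_fdiff (G : R -> R) a b c L :
  (forall v, continuous G v) -> (forall v, v < c -> G v = 0) -> (forall v, L < v -> G v = 0) ->
  a + d <= c -> L <= b ->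
  RInt (fun u => p u * G u) a b = / 2 * RInt (fun u => p u * fdiff d G u) a b.
Proof.
  intros HGc HG1 HG2 hac hLb.
  set (P := fun u => p u * G u).
  assert (HP : forall x y, ex_RInt P x y)
    by (intros; apply ex_RInt_continuous_R; intros; apply (continuous_mult p G); auto).
  set (Q := fun u => p u * G (u + d)).
  assert (E1 : RInt (fun u => p u * fdiff d G u) a b = RInt P a b - RInt Q a b).
  { rewrite <- (RInt_minus P Q) by (apply ex_RInt_continuous_R; intros;
      apply (continuous_mult p); auto using continuous_shift).
    apply RInt_ext. intros; unfold P, Q, fdiff, minus, plus, opp; simpl. ring. }
  assert (E2 : RInt Q a b = - RInt P (a + d) (b + d)).
  { rewrite <- (RInt_opp (V := R_CompleteNormedModule)) by apply HP.
    replace (a + d) with (1 * a + d) by ring. replace (b + d) with (1 * b + d) by ring.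
    rewrite <- RInt_comp_lin.
    - apply RInt_ext. intros x _. unfold Q, P, scal, opp; simpl; unfold mult; simpl.
      replace (p x) with (p (1 * x + d - d)) by (f_equal; ring).
      rewrite p_antiperiodic. replace (1 * x + d) with (x + d) by ring. ring.
    - apply ex_RInt_continuous_R. intros z.
      apply (continuous_opp (V := R_NormedModule) P), (continuous_mult p G); auto. }
  assert (E3 : RInt P (a + d) (b + d) = RInt P a b).
  { pose proof (RInt_Chasles P a (a + d) (b + d) (HP _ _) (HP _ _)) as C1.
    pose proof (RInt_Chasles P a b (b + d) (HP _ _) (HP _ _)) as C2.
    unfold plus in C1, C2; simpl in C1, C2.
    rewrite (RInt_eq0 P a (a + d)) in C1.
    - rewrite (RInt_eq0 P b (b + d)) in C2; [lra |].
      intros x hx. rewrite Rmin_left, Rmax_right in hx by lra. unfold P. rewrite HG2 by lra. ring.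
    - intros x hx. rewrite Rmin_left, Rmax_right in hx by lra. unfold P. rewrite HG1 by lra. ring. }
  rewrite E1, E2, E3. lra.
Qed.

Lemma RInt_antiperiodic_fdiff_iter (a b L : R) k : L <= b ->
  forall (G : R -> R) c,
  (forall v, continuous G v) -> (forall v, v < c -> G v = 0) -> (forall v, L < v -> G v = 0) ->
  a + INR k * d <= c ->
  RInt (fun u => p u * G u) a b = (/ 2) ^ k * RInt (fun u => p u * fdiff_iter k d G u) a b.
Proof.
  intros hLb. induction k as [|k IH]; intros G c HGc HG1 HG2 hac.
  - simpl. symmetry. apply Rmult_1_l.
  - rewrite S_INR in hac. pose proof (pos_INR k).
    rewrite (RInt_antiperiodic_fdiff G a b c L) by (auto; nra).
    rewrite (IH (fdiff d G) (c - d)).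
    + simpl. symmetry. apply Rmult_assoc.
    + apply (continuous_fdiff_iter 1); exact HGc.
    + intros v hv. unfold fdiff. rewrite !HG1 by lra. ring.
    + intros v hv. unfold fdiff. rewrite !HG2 by lra. ring.
    + lra.
Qed.

End AntiperiodicShift.

(* Density of the image of [phi(x) dx] under [x ↦ x^2], extended by 0 to [u <= 0]. *)
Definition sq_density (phi : R -> R) (u : R) : R :=
  if Rlt_dec 0 u then phi (sqrt u) / (2 * sqrt u) else 0.

Lemma sq_density_nonpos phi v : v <= 0 -> sq_density phi v = 0.
Proof. intros hv. unfold sq_density. destruct (Rlt_dec 0 v); [lra | reflexivity]. Qed.

Lemma sq_density_vanishing phi lam v : 0 < lam ->
  (forall x, 0 < x -> lam < x -> phi x = 0) -> lam ^ 2 < v -> sq_density phi v = 0.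
Proof.
  intros hl Hphi hv. unfold sq_density. destruct (Rlt_dec 0 v); [| reflexivity].
  assert (lam < sqrt v).
  { rewrite <- (sqrt_pow2 lam) by lra. apply sqrt_lt_1; [nra | lra | exact hv]. }
  rewrite Hphi by lra. unfold Rdiv. ring.
Qed.

Lemma tildeO_sq_density k b C phi : tildeO k b C phi ->
  tildeO k ((b - 1) / 2) (comp_sqrt_const k * (div_x_const k * C)) (sq_density phi).
Proof.
  intros H. pose proof (tildeO_const_nonneg _ _ _ _ H). pose proof (div_x_const_ge_1 k).
  assert (Hh : tildeO k (b - 1) (div_x_const k * C) (fun x => / 2 * (phi x / x))).
  { eapply tildeO_le_const; [| exact (tildeO_scal _ _ _ (/ 2) _ (tildeO_div_x _ _ _ _ H))].
    rewrite Rabs_pos_eq by lra. nra. }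
  eapply tildeO_ext; [| exact (tildeO_comp_sqrt _ _ _ _ Hh)].
  intros u hu. pose proof (sqrt_lt_R0 u hu). unfold sq_density.
  destruct (Rlt_dec 0 u); [field; lra | lra].
Qed.

Lemma tildeO_vanishing_continuous k e C F : (1 <= k)%nat -> 1 <= e -> tildeO k e C F ->
  (forall v, v <= 0 -> F v = 0) -> forall v, continuous F v.
Proof.
  intros hk he HF HF0 v. destruct k as [|k]; [lia |]. destruct (Rtotal_order v 0) as [hv | [-> | hv]].
  - apply (continuous_ext_loc _ (fun _ => 0)); [| apply continuous_const].
    apply (locally_open (fun u => u < 0)); [apply open_lt | | exact hv].
    intros u hu. symmetry. apply HF0. lra.
  - (* near 0, [|F v| <= C v^e <= C v] *)
    pose proof (tildeO_const_nonneg _ _ _ _ HF) as hC. pose proof (tildeO_le _ _ _ _ HF) as HFb.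
    apply continuity_pt_filterlim. intros eps heps.
    exists (Rmin 1 (eps / (C + 1))). split; [apply Rmin_pos; [lra | apply Rdiv_lt_0_compat; lra] |].
    intros x [_ hx]. simpl in *. unfold R_dist in *.
    rewrite (HF0 0) by lra. rewrite !Rminus_0_r in *.
    destruct (Rle_or_lt x 0) as [h | h]; [rewrite HF0, Rabs_R0; lra |].
    rewrite Rabs_pos_eq in hx by lra.
    pose proof (Rmin_l 1 (eps / (C + 1))). pose proof (Rmin_r 1 (eps / (C + 1))).
    pose proof (HFb x h).
    assert (Rpower x e <= x).
    { replace e with (1 + (e - 1)) by ring. rewrite Rpower_plus, Rpower_1 by lra.
      pose proof (Rpower_le_1 x (e - 1) ltac:(lra) ltac:(lra)). nra. }
    assert (x * (C + 1) < eps).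
    { assert (E : eps / (C + 1) * (C + 1) = eps) by (field; lra).
      assert (Rmin 1 (eps / (C + 1)) * (C + 1) <= eps / (C + 1) * (C + 1))
        by (apply Rmult_le_compat_r; lra).
      apply (Rmult_lt_compat_r (C + 1)) in hx; lra. }
    nra.
  - exact (tildeO_continuous _ _ _ _ _ HF hv).
Qed.

Lemma RInt_comp_sq (q phi : R -> R) lam : 0 < lam ->
  (forall u, continuous q u) -> (forall u, continuous (sq_density phi) u) ->
  ex_RInt (fun x => q (x ^ 2) * phi x) 0 lam /\
  RInt (fun x => q (x ^ 2) * phi x) 0 lam = RInt (fun u => q u * sq_density phi u) 0 (lam ^ 2).
Proof.
  intros hl Hq HF.
  set (f := fun u => q u * sq_density phi u).
  assert (Hf : forall u, continuous f u) by (intros u; apply (continuous_mult q); auto).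
  set (Phi := fun x => 2 * x * f (x ^ 2)).
  assert (HPhi : forall x, continuous Phi x).
  { intros x. apply (continuous_mult (fun x => 2 * x));
      [exact (continuous_comp_mult (fun x => x) 2 continuous_id x) |].
    apply (continuous_comp (fun x => x ^ 2) f); auto.
    apply (ex_derive_continuous (K := R_AbsRing) (V := R_NormedModule)). auto_derive. exact I. }
  assert (E : forall x, Rmin 0 lam < x < Rmax 0 lam -> Phi x = q (x ^ 2) * phi x).
  { intros x hx. rewrite Rmin_left, Rmax_right in hx by lra. unfold Phi, f, sq_density.
    destruct (Rlt_dec 0 (x ^ 2)) as [h | h]; [| exfalso; apply h; nra].
    replace (sqrt (x ^ 2)) with x by (rewrite <- Rsqr_pow2, sqrt_Rsqr; lra).
    field. lra. }
  split.
  - apply (ex_RInt_ext Phi); auto. apply ex_RInt_continuous_R; exact HPhi.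
  - rewrite <- (RInt_ext Phi) by exact E.
    transitivity (RInt f (0 ^ 2) (lam ^ 2)); [| f_equal; ring].
    rewrite <- (RInt_comp (V := R_CompleteNormedModule) f (fun x => x ^ 2) (fun x => 2 * x)).
    + apply RInt_ext. intros x _. unfold Phi, scal; simpl; unfold mult; simpl. ring.
    + intros; auto.
    + intros x _. split; [auto_derive; auto; ring |].
      exact (continuous_comp_mult (fun x => x) 2 continuous_id x).
Qed.

(* [∫_0^U (u^g + U^g) du], for [g > -1]. *)
Definition power_int_bound (U g : R) : R := Rpower U (g + 1) / (g + 1) + Rpower U g * U.

Lemma power_int_bound_nonneg U g : 0 < U -> -1 < g -> 0 <= power_int_bound U g.
Proof.
  intros hU hg. unfold power_int_bound, Rdiv.
  pose proof (Rpower_pos U (g + 1)). pose proof (Rpower_pos U g).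
  pose proof (Rinv_0_lt_compat (g + 1) ltac:(lra)).
  apply Rplus_le_le_0_compat; apply Rmult_le_pos; lra.
Qed.

Lemma abs_RInt_le_power (P : R -> R) a b U g c : 0 < a <= b -> b <= U -> -1 < g -> 0 <= c ->
  (forall u, continuous P u) ->
  (forall u, a <= u <= b -> Rabs (P u) <= c * (Rpower u g + Rpower U g)) ->
  Rabs (RInt P a b) <= c * power_int_bound U g.
Proof.
  intros hab hbU hg hc HPc HPb.
  set (Psi := fun u => c * (/ (g + 1) * Rpower u (g + 1) + Rpower U g * u)).
  set (psi := fun u => c * (Rpower u g + Rpower U g)).
  assert (HD : forall u, 0 < u -> is_derive Psi u (psi u)).
  { intros u hu. apply is_derive_Reals. unfold Psi, psi.
    replace (c * (Rpower u g + Rpower U g)) with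
      (c * (/ (g + 1) * ((g + 1) * Rpower u (g + 1 - 1)) + Rpower U g * 1))
      by (replace (g + 1 - 1) with g by ring; field; lra).
    apply derivable_pt_lim_scal, derivable_pt_lim_plus.
    - apply derivable_pt_lim_scal, derivable_pt_lim_power; exact hu.
    - apply derivable_pt_lim_scal, derivable_pt_lim_id. }
  assert (HI : is_RInt psi a b (minus (Psi b) (Psi a))).
  { apply (is_RInt_derive (V := R_CompleteNormedModule));
      intros x hx; rewrite Rmin_left, Rmax_right in hx by lra.
    - apply HD. lra.
    - apply (continuous_mult (fun _ => c)); [apply continuous_const |].
      apply (continuous_plus (fun u => Rpower u g)); [| apply continuous_const].
      apply (ex_derive_continuous (K := R_AbsRing) (V := R_NormedModule)).
      exists (g * Rpower x (g - 1)). apply is_derive_Reals, derivable_pt_lim_power. lra. }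
  pose proof (norm_RInt_le (V := R_NormedModule) P psi a b _ _ ltac:(lra) HPb
    (RInt_correct (V := R_CompleteNormedModule) _ _ _ (ex_RInt_continuous_R P a b HPc)) HI) as N.
  change (Rabs (RInt P a b) <= minus (Psi b) (Psi a)) in N.
  eapply Rle_trans; [exact N |]. unfold minus, plus, opp; simpl. unfold Psi, power_int_bound.
  pose proof (Rpower_pos a (g + 1)). pose proof (Rpower_pos U g).
  assert (Rpower b (g + 1) <= Rpower U (g + 1)) by (apply Rle_Rpower_l; lra).
  pose proof (Rinv_0_lt_compat (g + 1) ltac:(lra)).
  assert (X : / (g + 1) * Rpower b (g + 1) + Rpower U g * b
               - (/ (g + 1) * Rpower a (g + 1) + Rpower U g * a)
             <= / (g + 1) * Rpower U (g + 1) + Rpower U g * U) by nra.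
  apply Rmult_le_compat_l with (r := c) in X; [unfold Rdiv; lra | exact hc].
Qed.

Section FdiffIntegral.

Variables (p F : R -> R) (m : nat) (d e C : R).
Hypothesis m_pos : (1 <= m)%nat.
Hypothesis d_bounds : 0 < d <= 1.
Hypothesis p_continuous : forall x, continuous p x.
Hypothesis p_le_1 : forall x, Rabs (p x) <= 1.
Hypothesis F_continuous : forall v, continuous F v.
Hypothesis F_eq0 : forall v, v <= 0 -> F v = 0.
Hypothesis F_tildeO : tildeO m e C F.

Lemma ex_RInt_fdiff_iter a b : ex_RInt (fun u => p u * fdiff_iter m d F u) a b.
Proof.
  apply ex_RInt_continuous_R. intros u.
  apply (continuous_mult p); auto using continuous_fdiff_iter.
Qed.

Lemma abs_RInt_fdiff_iter_near : INR m - 1 <= e ->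
  Rabs (RInt (fun u => p u * fdiff_iter m d F u) (- (INR m * d)) (INR m * d))
  <= 2 ^ m * C * Rpower (2 * INR m) (e + 1) * d ^ m.
Proof.
  intros he. pose proof (le_INR 1 m m_pos) as hm. simpl in hm.
  pose proof (tildeO_const_nonneg _ _ _ _ F_tildeO) as hC.
  pose proof (Rpower_pos (2 * INR m * d) e).
  set (M := 2 ^ m * (C * Rpower (2 * INR m * d) e)).
  assert (HF : forall u, u <= INR m * d -> Rabs (fdiff_iter m d F u) <= M).
  { intros u hu. apply fdiff_iter_abs_le; [lra |]. intros v hv.
    destruct (Rle_or_lt v 0) as [h | h].
    - rewrite F_eq0, Rabs_R0 by exact h. pose proof (pow_le 2 m ltac:(lra)). unfold M. nra.
    - eapply Rle_trans; [exact (tildeO_le _ _ _ _ F_tildeO v h) |].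
      apply Rmult_le_compat_l; [exact hC |]. apply Rle_Rpower_l; [lra | nra]. }
  eapply Rle_trans.
  - apply (abs_RInt_le_const _ _ _ M); [nra | apply ex_RInt_fdiff_iter |].
    intros u hu. rewrite Rabs_mult.
    pose proof (p_le_1 u). pose proof (Rabs_pos (p u)). pose proof (HF u ltac:(lra)).
    pose proof (Rabs_pos (fdiff_iter m d F u)). nra.
  - replace ((INR m * d - - (INR m * d)) * M) with (2 ^ m * C * Rpower (2 * INR m * d) (e + 1))
      by (unfold M; rewrite Rpower_plus, Rpower_1 by nra; ring).
    rewrite <- Rpower_mult_distr by nra. rewrite <- Rmult_assoc.
    apply Rmult_le_compat_l.
    + pose proof (pow_le 2 m ltac:(lra)). pose proof (Rpower_pos (2 * INR m) (e + 1)).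
      apply Rmult_le_pos; [apply Rmult_le_pos |]; lra.
    + apply Rpower_le_pow; lra.
Qed.

Lemma abs_RInt_fdiff_iter_far b U : -1 < e - INR m -> INR m * d <= b -> b + INR m <= U ->
  Rabs (RInt (fun u => p u * fdiff_iter m d F u) (INR m * d) b)
  <= C * power_int_bound U (e - INR m) * d ^ m.
Proof.
  intros hg hb hU. pose proof (le_INR 1 m m_pos) as hm. simpl in hm.
  pose proof (tildeO_const_nonneg _ _ _ _ F_tildeO) as hC.
  pose proof (pow_le d m ltac:(lra)) as hdm.
  destruct (tildeO_derivs _ _ _ _ F_tildeO) as [G [HG0 [HGd HGb]]].
  replace (C * power_int_bound U (e - INR m) * d ^ m)
    with (d ^ m * C * power_int_bound U (e - INR m)) by ring.
  apply abs_RInt_le_power; [nra | lra | exact hg | nra | |].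
  { intros u. apply (continuous_mult p); auto using continuous_fdiff_iter. }
  intros u hu. cbv beta.
  destruct (fdiff_iter_mvt m G d u ltac:(lra) ltac:(nra) HGd) as [xi [hxi E]].
  rewrite <- HG0, E, Rabs_mult, Rabs_mult, <- RPow_abs, Rabs_Ropp, (Rabs_pos_eq d) by lra.
  (* [u^g + U^g] bounds [xi^g] for every [xi] in [u, U], whatever the sign of [g]. *)
  assert (Hxi : Rabs (G m xi) <= C * (Rpower u (e - INR m) + Rpower U (e - INR m))).
  { eapply Rle_trans; [apply HGb; nra |]. apply Rmult_le_compat_l; [exact hC |].
    pose proof (Rpower_pos u (e - INR m)). pose proof (Rpower_pos U (e - INR m)).
    destruct (Rle_or_lt 0 (e - INR m)).
    - assert (Rpower xi (e - INR m) <= Rpower U (e - INR m)) by (apply Rle_Rpower_l; nra). lra.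
    - assert (Rpower xi (e - INR m) <= Rpower u (e - INR m))
        by (apply Rle_Rpower_l_neg; nra). lra. }
  pose proof (p_le_1 u). pose proof (Rabs_pos (p u)). pose proof (Rabs_pos (G m xi)).
  assert (Rabs (p u) * (d ^ m * Rabs (G m xi)) <= d ^ m * Rabs (G m xi)).
  { assert (0 <= d ^ m * Rabs (G m xi)) by nra. nra. }
  assert (d ^ m * Rabs (G m xi) <= d ^ m * (C * (Rpower u (e - INR m) + Rpower U (e - INR m))))
    by (apply Rmult_le_compat_l; assumption).
  lra.
Qed.

Lemma abs_RInt_fdiff_iter_le L U0 : 0 < L <= U0 -> (forall v, L < v -> F v = 0) ->
  INR m - 1 < e ->
  Rabs (RInt (fun u => p u * fdiff_iter m d F u) (- (INR m * d)) L)
  <= (2 ^ m * C * Rpower (2 * INR m) (e + 1)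
      + C * power_int_bound (U0 + 2 * INR m) (e - INR m)) * d ^ m.
Proof.
  intros hL HFL he. pose proof (le_INR 1 m m_pos) as hm. simpl in hm.
  set (M := Rmax L (INR m * d)).
  assert (E : RInt (fun u => p u * fdiff_iter m d F u) (- (INR m * d)) L
            = RInt (fun u => p u * fdiff_iter m d F u) (- (INR m * d)) (INR m * d)
              + RInt (fun u => p u * fdiff_iter m d F u) (INR m * d) M).
  { pose proof (RInt_Chasles _ (- (INR m * d)) L M (ex_RInt_fdiff_iter _ _)
                  (ex_RInt_fdiff_iter _ _)) as Ch1.
    pose proof (RInt_Chasles _ (- (INR m * d)) (INR m * d) M (ex_RInt_fdiff_iter _ _)
                  (ex_RInt_fdiff_iter _ _)) as Ch2.
    unfold plus in Ch1, Ch2; simpl in Ch1, Ch2.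
    rewrite (RInt_eq0 _ L M) in Ch1; [lra |].
    intros x hx. rewrite Rmin_left, Rmax_right in hx by apply Rmax_l.
    rewrite (fdiff_iter_eq0 m d F L) by (exact HFL || lra). ring. }
  rewrite E. eapply Rle_trans; [apply Rabs_triang |]. rewrite Rmult_plus_distr_r.
  apply Rplus_le_compat.
  - apply abs_RInt_fdiff_iter_near. lra.
  - apply abs_RInt_fdiff_iter_far; [lra | apply Rmax_r | unfold M; apply Rmax_case; nra].
Qed.

Lemma abs_RInt_antiperiodic_le L U0 : 0 < L <= U0 -> (forall v, L < v -> F v = 0) ->
  INR m - 1 < e -> (forall w, p (w - d) = - p w) ->
  Rabs (RInt (fun u => p u * F u) 0 L)
  <= C * (Rpower (2 * INR m) (e + 1) + power_int_bound (U0 + 2 * INR m) (e - INR m)) * d ^ m.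
Proof.
  intros hL HFL he Hp. pose proof (le_INR 1 m m_pos) as hm. simpl in hm.
  pose proof (tildeO_const_nonneg _ _ _ _ F_tildeO) as hC.
  assert (HpF : forall a b, ex_RInt (fun u => p u * F u) a b)
    by (intros; apply ex_RInt_continuous_R; intros; apply (continuous_mult p); auto).
  assert (E : RInt (fun u => p u * F u) 0 L = RInt (fun u => p u * F u) (- (INR m * d)) L).
  { pose proof (RInt_Chasles _ (- (INR m * d)) 0 L (HpF _ _) (HpF _ _)) as Ch.
    unfold plus in Ch; simpl in Ch.
    rewrite (RInt_eq0 _ (- (INR m * d)) 0) in Ch; [lra |].
    intros x hx. rewrite Rmin_left, Rmax_right in hx by nra. rewrite F_eq0 by lra. ring. }
  rewrite E, (RInt_antiperiodic_fdiff_iter p d ltac:(lra) p_continuous Hp (- (INR m * d)) L L m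
                ltac:(lra) F 0 F_continuous ltac:(intros; apply F_eq0; lra) HFL ltac:(lra)).
  rewrite Rabs_mult, Rabs_pos_eq by (apply pow_le; lra).
  eapply Rle_trans; [apply Rmult_le_compat_l; [apply pow_le; lra |];
                     exact (abs_RInt_fdiff_iter_le L U0 hL HFL he) |].
  pose proof (Rpower_pos (2 * INR m) (e + 1)).
  pose proof (power_int_bound_nonneg (U0 + 2 * INR m) (e - INR m) ltac:(lra) ltac:(lra)).
  pose proof (pow_le d m ltac:(lra)). pose proof (pow_le (/ 2) m ltac:(lra)).
  assert (Hhalf : (/ 2) ^ m * 2 ^ m = 1) by (rewrite <- Rpow_mult_distr, Rinv_l, pow1; lra).
  assert (Hhalf_le : (/ 2) ^ m <= 1) by (rewrite <- (pow1 m); apply pow_incr; lra).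
  set (Q := C * power_int_bound (U0 + 2 * INR m) (e - INR m) * d ^ m).
  assert (0 <= Q) by (unfold Q; apply Rmult_le_pos; [apply Rmult_le_pos |]; lra).
  replace ((/ 2) ^ m * ((2 ^ m * C * Rpower (2 * INR m) (e + 1)
             + C * power_int_bound (U0 + 2 * INR m) (e - INR m)) * d ^ m))
    with (((/ 2) ^ m * 2 ^ m) * (C * Rpower (2 * INR m) (e + 1) * d ^ m) + (/ 2) ^ m * Q)
    by (unfold Q; ring).
  assert ((/ 2) ^ m * Q <= Q) by nra.
  rewrite Hhalf. unfold Q in *. lra.
Qed.

End FdiffIntegral.

Lemma abs_RInt_vanishing_le (p F : R -> R) k e C L U0 : 0 <= e -> 0 < L <= U0 ->
  (forall x, continuous p x) -> (forall x, Rabs (p x) <= 1) ->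
  (forall v, continuous F v) -> (forall v, v <= 0 -> F v = 0) -> tildeO k e C F ->
  Rabs (RInt (fun u => p u * F u) 0 L) <= U0 * (C * Rpower U0 e).
Proof.
  intros he hL Hpc Hp1 HFc HF0 HF. pose proof (tildeO_const_nonneg _ _ _ _ HF) as hC.
  pose proof (Rpower_pos U0 e).
  eapply Rle_trans.
  - apply (abs_RInt_le_const _ _ _ (C * Rpower U0 e)); [lra | |].
    + apply ex_RInt_continuous_R. intros u. apply (continuous_mult p); auto.
    + intros u hu. rewrite Rabs_mult. pose proof (Hp1 u). pose proof (Rabs_pos (p u)).
      assert (Rabs (F u) <= C * Rpower U0 e).
      { destruct (Rle_or_lt u 0) as [h | h]; [rewrite HF0, Rabs_R0 by exact h; nra |].
        eapply Rle_trans; [exact (tildeO_le _ _ _ _ HF u h) |].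
        apply Rmult_le_compat_l; [exact hC | apply Rle_Rpower_l; lra]. }
      pose proof (Rabs_pos (F u)). nra.
  - apply Rmult_le_compat_r; nra.
Qed.

Lemma antiperiodic_dilate (psi : R -> R) t : t <> 0 -> (forall x, psi (x + PI) = - psi x) ->
  forall w, psi (t * (w - PI / Rabs t)) = - psi (t * w).
Proof.
  intros ht Hpsi w. destruct (Rle_or_lt 0 t) as [h | h].
  - rewrite Rabs_pos_eq by lra.
    replace (t * (w - PI / t)) with (t * w - PI) by (field; lra).
    replace (t * w) with (t * w - PI + PI) at 2 by ring. rewrite Hpsi. ring.
  - rewrite Rabs_left by lra. replace (t * (w - PI / - t)) with (t * w + PI) by (field; lra).
    apply Hpsi.
Qed.

Lemma pow_PI_div_abs t m : t <> 0 -> (PI / Rabs t) ^ m = PI ^ m * Rpower (Rabs t) (- INR m).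
Proof.
  intros ht. pose proof (Rabs_pos_lt t ht).
  rewrite Rpower_Ropp, Rpower_pow by lra. unfold Rdiv. rewrite Rpow_mult_distr, pow_inv. reflexivity.
Qed.

Lemma abs_RInt_osc_le m e C U0 : (1 <= m)%nat -> INR m - 1 < e -> 0 <= C -> 0 < U0 ->
  exists Cu, 0 <= Cu /\
  forall (psi F : R -> R) L t, 0 < L <= U0 -> t <> 0 ->
  (forall x, continuous psi x) -> (forall x, psi (x + PI) = - psi x) ->
  (forall x, Rabs (psi x) <= 1) ->
  (forall v, continuous F v) -> (forall v, v <= 0 -> F v = 0) -> (forall v, L < v -> F v = 0) ->
  tildeO m e C F ->
  Rabs (RInt (fun u => psi (t * u) * F u) 0 L) <= Cu * Rpower (Rabs t) (- INR m).
Proof.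
  intros hm he hC hU0. pose proof (le_INR 1 m hm) as hmr. simpl in hmr.
  set (Cs := U0 * (C * Rpower U0 e)).
  set (Cl := C * (Rpower (2 * INR m) (e + 1) + power_int_bound (U0 + 2 * INR m) (e - INR m))).
  assert (hCs : 0 <= Cs).
  { pose proof (Rpower_pos U0 e). unfold Cs. apply Rmult_le_pos; [| apply Rmult_le_pos]; lra. }
  assert (hCl : 0 <= Cl).
  { pose proof (Rpower_pos (2 * INR m) (e + 1)).
    pose proof (power_int_bound_nonneg (U0 + 2 * INR m) (e - INR m) ltac:(lra) ltac:(lra)).
    unfold Cl. apply Rmult_le_pos; lra. }
  pose proof (pow_lt PI m PI_RGT_0) as hPI.
  exists ((Cs + Cl) * PI ^ m). split; [nra |].
  intros psi F L t hL ht Hpc Hpsi Hp1 HFc HF0 HFL HF.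
  set (p := fun u => psi (t * u)).
  pose proof (continuous_comp_mult psi t Hpc) as Hpc'.
  pose proof (Rabs_pos_lt t ht) as hat. pose proof (Rpower_pos (Rabs t) (- INR m)).
  assert (0 <= Cs * PI ^ m * Rpower (Rabs t) (- INR m)) by (apply Rmult_le_pos; nra).
  assert (0 <= Cl * PI ^ m * Rpower (Rabs t) (- INR m)) by (apply Rmult_le_pos; nra).
  destruct (Rlt_or_le (Rabs t) PI) as [hsmall | hlarge].
  - pose proof (abs_RInt_vanishing_le p F m e C L U0 ltac:(lra) hL Hpc'
                  ltac:(intros; apply Hp1) HFc HF0 HF) as Hs.
    assert (1 <= PI ^ m * Rpower (Rabs t) (- INR m)).
    { rewrite <- pow_PI_div_abs by exact ht. rewrite <- (pow1 m). apply pow_incr.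
      split; [lra |]. apply (Rmult_le_reg_r (Rabs t)); [exact hat |].
      unfold Rdiv. rewrite Rmult_assoc, Rinv_l by lra. lra. }
    assert (Cs <= Cs * (PI ^ m * Rpower (Rabs t) (- INR m)))
      by (rewrite <- (Rmult_1_r Cs) at 1; apply Rmult_le_compat_l; assumption).
    cbv beta delta [p] in Hs. fold Cs in Hs. lra.
  - set (d := PI / Rabs t).
    assert (hd : 0 < d <= 1).
    { unfold d. split; [apply Rdiv_lt_0_compat; [apply PI_RGT_0 | exact hat] |].
      apply (Rmult_le_reg_r (Rabs t)); [exact hat |].
      unfold Rdiv. rewrite Rmult_assoc, Rinv_l by lra. lra. }
    pose proof (abs_RInt_antiperiodic_le p F m d e C hm hd Hpc' ltac:(intros; apply Hp1)
                  HFc HF0 HF L U0 hL HFL he (antiperiodic_dilate psi t ht Hpsi)) as Hl.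
    cbv beta delta [p] in Hl. fold Cl in Hl. unfold d in Hl.
    rewrite pow_PI_div_abs in Hl by exact ht. lra.
Qed.

Lemma real_osc_bound m al Lam K : (2 <= m)%nat -> 2 * INR m - 1 < al -> 0 < Lam ->
  exists Cr, 0 < Cr /\
  forall lam1 (phi psi : R -> R), 0 < lam1 -> lam1 <= Lam ->
  (forall x, 0 < x -> lam1 < x -> phi x = 0) -> tildeO m al K phi ->
  (forall x, continuous psi x) -> (forall x, psi (x + PI) = - psi x) ->
  (forall x, Rabs (psi x) <= 1) ->
  forall t, t <> 0 ->
  ex_RInt (fun x => psi (t * x ^ 2) * phi x) 0 lam1 /\
  Rabs (RInt (fun x => psi (t * x ^ 2) * phi x) 0 lam1) <= Cr * Rpower (Rabs t) (- INR m).
Proof.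
  intros hm hal hLam. pose proof (le_INR 2 m hm) as hmr. simpl in hmr.
  set (e := (al - 1) / 2).
  (* [Rmax K 0] avoids a sign hypothesis on [K]; [tildeO m al K phi] forces [K >= 0] anyway. *)
  set (C := comp_sqrt_const m * (div_x_const m * Rmax K 0)).
  assert (hC : 0 <= C).
  { pose proof (comp_sqrt_const_ge_1 m). pose proof (div_x_const_ge_1 m). pose proof (Rmax_r K 0).
    unfold C. apply Rmult_le_pos; [| apply Rmult_le_pos]; lra. }
  destruct (abs_RInt_osc_le m e C (Lam ^ 2) ltac:(lia) ltac:(unfold e; lra) hC ltac:(nra))
    as [Cu [hCu HCu]].
  exists (Cu + 1). split; [lra |].
  intros lam1 phi psi hl1 hl2 Hsupp Hphi Hpc Hpsi Hp1 t ht.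
  assert (HF : tildeO m e C (sq_density phi)).
  { apply tildeO_sq_density. eapply tildeO_le_const; [apply Rmax_l | exact Hphi]. }
  assert (HFc : forall v, continuous (sq_density phi) v).
  { apply (tildeO_vanishing_continuous m e C); [lia | unfold e; lra | exact HF |].
    apply sq_density_nonpos. }
  destruct (RInt_comp_sq _ phi lam1 hl1 (continuous_comp_mult psi t Hpc) HFc) as [Hex Heq].
  split; [exact Hex |]. rewrite Heq.
  pose proof (Rpower_pos (Rabs t) (- INR m)).
  eapply Rle_trans.
  - apply (HCu psi (sq_density phi)); auto.
    + split; [apply pow_lt; lra | apply pow_incr; lra].
    + apply sq_density_nonpos.
    + intros v. apply sq_density_vanishing; assumption.
  - nra.
Qed.

Lemma is_derive_Re (h : R -> C) x v :
  @is_derive R_AbsRing C_R_NormedModule h x v -> is_derive (fun y => Re (h y)) x (Re v).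
Proof.
  intros H.
  exact (filterdiff_comp' (K := R_AbsRing) (U := R_NormedModule)
           (V := prod_NormedModule R_AbsRing R_NormedModule R_NormedModule) (W := R_NormedModule)
           h fst x _ fst H (filterdiff_linear _ is_linear_fst)).
Qed.

Lemma is_derive_Im (h : R -> C) x v :
  @is_derive R_AbsRing C_R_NormedModule h x v -> is_derive (fun y => Im (h y)) x (Im v).
Proof.
  intros H.
  exact (filterdiff_comp' (K := R_AbsRing) (U := R_NormedModule)
           (V := prod_NormedModule R_AbsRing R_NormedModule R_NormedModule) (W := R_NormedModule)
           h snd x _ snd H (filterdiff_linear _ is_linear_snd)).
Qed.

Lemma im_le_Cmod (z : C) : Rabs (Im z) <= Cmod z.
Proof.
  pose proof (Rmax_Cmod z). pose proof (Rmax_r (Rabs (fst z)) (Rabs (snd z))). unfold Im. lra.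
Qed.

Lemma Cmod_le_Rabs_plus (a b : R) : Cmod (a, b) <= Rabs a + Rabs b.
Proof.
  unfold Cmod; simpl. pose proof (Rabs_pos a). pose proof (Rabs_pos b).
  rewrite <- (sqrt_pow2 (Rabs a + Rabs b)) by lra. apply sqrt_le_1_alt.
  pose proof (Rsqr_abs a). pose proof (Rsqr_abs b). unfold Rsqr in *. nra.
Qed.

Lemma tildeO_hyp_proj (pr : C -> R) m al K f :
  (forall (h : R -> C) x v, @is_derive R_AbsRing C_R_NormedModule h x v ->
     is_derive (fun y => pr (h y)) x (pr v)) ->
  (forall z, Rabs (pr z) <= Cmod z) ->
  tildeO_hyp m al K f -> tildeO m al K (fun x => pr (f x)).
Proof.
  intros Hpr Hprb [g [Hg0 [Hd Hb]]].
  assert (Hj : forall k j, (j + k = m)%nat -> tildeO k (al - INR j) K (fun x => pr (g j x))).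
  { induction k as [|k IH]; intros j hjk;
      (split; [intros x hx; eapply Rle_trans; [apply Hprb | apply Hb; auto; lia] |]); [exact I |].
    exists (fun x => pr (g (S j) x)). split.
    - intros x hx. apply Hpr, Hd; auto; lia.
    - replace (al - INR j - 1) with (al - INR (S j)) by (rewrite S_INR; ring).
      apply IH. lia. }
  apply (tildeO_ext _ _ _ (fun x => pr (g 0%nat x))); [intros; rewrite Hg0; reflexivity |].
  replace al with (al - INR 0) at 1 by (simpl; ring). apply Hj. lia.
Qed.

Lemma Cmod_osc_int_le t lam1 (f : R -> C) B :
  ex_RInt (fun x => cos (t * x ^ 2) * Re (f x)) 0 lam1 /\
    Rabs (RInt (fun x => cos (t * x ^ 2) * Re (f x)) 0 lam1) <= B ->
  ex_RInt (fun x => sin (t * x ^ 2) * Im (f x)) 0 lam1 /\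
    Rabs (RInt (fun x => sin (t * x ^ 2) * Im (f x)) 0 lam1) <= B ->
  ex_RInt (fun x => cos (t * x ^ 2) * Im (f x)) 0 lam1 /\
    Rabs (RInt (fun x => cos (t * x ^ 2) * Im (f x)) 0 lam1) <= B ->
  ex_RInt (fun x => sin (t * x ^ 2) * Re (f x)) 0 lam1 /\
    Rabs (RInt (fun x => sin (t * x ^ 2) * Re (f x)) 0 lam1) <= B ->
  Cmod (osc_int t lam1 f) <= 4 * B.
Proof.
  intros [X1 Y1] [X2 Y2] [X3 Y3] [X4 Y4].
  assert (E : osc_int t lam1 f =
    (RInt (fun x => cos (t * x ^ 2) * Re (f x)) 0 lam1
       - RInt (fun x => sin (t * x ^ 2) * Im (f x)) 0 lam1,
     RInt (fun x => cos (t * x ^ 2) * Im (f x)) 0 lam1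
       + RInt (fun x => sin (t * x ^ 2) * Re (f x)) 0 lam1)).
  { unfold osc_int. apply (is_RInt_unique (V := C_R_CompleteNormedModule)).
    apply (is_RInt_fct_extend_pair (U := R_NormedModule) (V := R_NormedModule)).
    - apply (is_RInt_ext (fun x => minus (cos (t * x ^ 2) * Re (f x)) (sin (t * x ^ 2) * Im (f x)))).
      + intros x _. unfold eix, Cmult, Re, Im, minus, plus, opp; simpl. ring.
      + apply (is_RInt_minus (V := R_NormedModule));
          apply (RInt_correct (V := R_CompleteNormedModule)); assumption.
    - apply (is_RInt_ext (fun x => plus (cos (t * x ^ 2) * Im (f x)) (sin (t * x ^ 2) * Re (f x)))).
      + intros x _. unfold eix, Cmult, Re, Im, plus; simpl. ring.
      + apply (is_RInt_plus (V := R_NormedModule));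
          apply (RInt_correct (V := R_CompleteNormedModule)); assumption. }
  rewrite E. eapply Rle_trans; [apply Cmod_le_Rabs_plus |].
  eapply Rle_trans; [apply Rplus_le_compat; apply Rabs_triang |].
  rewrite Rabs_Ropp. lra.
Qed.

Lemma Rabs_cos_le_1 x : Rabs (cos x) <= 1.
Proof. apply Rabs_le. pose proof (COS_bound x). lra. Qed.

Lemma Rabs_sin_le_1 x : Rabs (sin x) <= 1.
Proof. apply Rabs_le. pose proof (SIN_bound x). lra. Qed.

Theorem lemma5p8 (n : nat) (alpha Lambda K : R) :
  Nat.Even n -> (6 <= n)%nat -> INR n - 3 < alpha -> 0 < Lambda ->
  exists Cst : R, 0 < Cst /\
    forall (lam1 : R) (f : R -> C),
      0 < lam1 -> lam1 <= Lambda ->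
      (forall lam, 0 < lam -> lam1 < lam -> f lam = 0) ->
      tildeO_hyp (n / 2 - 1) alpha K f ->
      forall t : R, t <> 0 ->
        Cmod (osc_int t lam1 f) <= Cst * Rpower (Rabs t) (1 - INR n / 2).
Proof.
  intros [k ->] h6 hal hL.
  replace (2 * k / 2 - 1)%nat with (k - 1)%nat by (rewrite Nat.mul_comm, Nat.div_mul; lia).
  set (m := (k - 1)%nat).
  assert (Ek : INR (2 * k) = 2 * INR m + 2)
    by (unfold m; rewrite mult_INR, minus_INR by lia; simpl; lra).
  replace (1 - INR (2 * k) / 2) with (- INR m) by (rewrite Ek; field).
  destruct (real_osc_bound m alpha Lambda K ltac:(lia) ltac:(lra) hL) as [Cr [hCr HCr]].
  exists (4 * Cr). split; [lra |].
  intros lam1 f hl1 hl2 Hsupp Hf t ht.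
  pose proof (tildeO_hyp_proj Re _ _ _ _ is_derive_Re re_le_Cmod Hf) as HRe.
  pose proof (tildeO_hyp_proj Im _ _ _ _ is_derive_Im im_le_Cmod Hf) as HIm.
  assert (HsRe : forall x, 0 < x -> lam1 < x -> Re (f x) = 0) by (intros; rewrite Hsupp; auto).
  assert (HsIm : forall x, 0 < x -> lam1 < x -> Im (f x) = 0) by (intros; rewrite Hsupp; auto).
  rewrite Rmult_assoc. apply Cmod_osc_int_le.
  - apply (HCr lam1 _ cos hl1 hl2 HsRe HRe continuous_cos neg_cos Rabs_cos_le_1 t ht).
  - apply (HCr lam1 _ sin hl1 hl2 HsIm HIm continuous_sin neg_sin Rabs_sin_le_1 t ht).
  - apply (HCr lam1 _ cos hl1 hl2 HsIm HIm continuous_cos neg_cos Rabs_cos_le_1 t ht).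
  - apply (HCr lam1 _ sin hl1 hl2 HsRe HRe continuous_sin neg_sin Rabs_sin_le_1 t ht).
Qed.
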